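(* Let $\mathcal E$ be a product system and let $F^1,F^2$ be inclusion subsystems of $\mathcal E$. For $t>0$ let $$G_t=\overline{\mathrm{span}}\{x\otimes y:x\in\mathcal E_r\ominus F^1_r,\ y\in\mathcal E_{t-r}\ominus F^2_{t-r}\ \text{for some }0<r<t\}$$ and $G'_t=\mathcal E_t\ominus G_t$. Then $G'=(G'_t)_{t>0}$ is an inclusion subsystem of $\mathcal E$ (i.e. $G'_{s+t}\subset G'_s\otimes G'_t$ under $\mathcal E_{s+t}\cong\mathcal E_s\otimes\mathcal E_t$) and $F^1_t\subset G'_t$, $F^2_t\subset G'_t$ for all $t>0$.
   Context: A product system is a measurable family of separable Hilbert spaces $(\mathcal E_t)_{t>0}$ with associative unitaries $V_{s,t}:\mathcal E_{s+t}\to\mathcal E_s\otimes\mathcal E_t$, used to identify $\mathcal E_{s+t}\cong\mathcal E_s\otimes\mathcal E_t$. An inclusion subsystem is a family of closed subspaces $F_t\subset\mathcal E_t$ with $V_{s,t}(F_{s+t})\subset F_s\otimes F_t$ for all $s,t>0$; with the restricted maps it is an inclusion system (family of Hilbert spaces with associative isometries $E_{s+t}\to E_s\otimes E_t$). *)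

From HB Require Import structures.
From mathcomp Require Import all_boot all_order all_algebra.
From mathcomp Require Import reals complex.
Set Implicit Arguments. Unset Strict Implicit. Unset Printing Implicit Defensive.
Import Order.TTheory GRing.Theory Num.Theory.
Local Open Scope ring_scope.

Notation Cx R := (complex R).

Section Hilbert.
Variables (R : realType) (V : lmodType (Cx R)) (ip : V -> V -> Cx R).

Definition d2 (x y : V) : Cx R := ip (x - y) (x - y).

Definition inner_product : Prop :=
  [/\ forall (a : Cx R) (x y z : V), ip (a *: x + y) z = a * ip x z + ip y z,
      forall x y : V, ip y x = (ip x y)^*,
      forall x : V, 0 <= ip x x
    & forall x : V, ip x x = 0 -> x = 0].

Definition complete_ip : Prop :=
  forall u : nat -> V,
    (forall e : Cx R, 0 < e -> exists N, forall n k, (N <= n)%N -> (N <= k)%N ->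
        d2 (u n) (u k) < e) ->
    exists x : V, forall e : Cx R, 0 < e -> exists N, forall n, (N <= n)%N ->
        d2 (u n) x < e.

Definition separable_ip : Prop :=
  exists d : nat -> V, forall (x : V) (e : Cx R), 0 < e -> exists n, d2 x (d n) < e.

Definition hilbert_space : Prop := [/\ inner_product, complete_ip & separable_ip].

Definition closure_ip (S : V -> Prop) (x : V) : Prop :=
  forall e : Cx R, 0 < e -> exists y, S y /\ d2 x y < e.

Definition lspan (S : V -> Prop) (x : V) : Prop :=
  exists (n : nat) (c : 'I_n -> Cx R) (v : 'I_n -> V),
    (forall i, S (v i)) /\ x = \sum_(i < n) c i *: v i.

Definition cspan (S : V -> Prop) : V -> Prop := closure_ip (lspan S).

Definition closed_subspace (S : V -> Prop) : Prop :=
  [/\ S 0,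
      forall (a : Cx R) x y, S x -> S y -> S (a *: x + y)
    & forall x, closure_ip S x -> S x].

Definition orthc (S : V -> Prop) (x : V) : Prop := forall y, S y -> ip x y = 0.

End Hilbert.

Definition tcast (R : realType) (E : R -> lmodType (Cx R)) (a b : R) (H : a = b)
  (v : E a) : E b := eq_rect a (fun u => (E u : Type)) v b H.

(* A product system: family (E_t)_{t>0} of separable Hilbert spaces, with
   the identification E_{s+t} ~= E_s (x) E_t encoded by the map
   m s t : E_s -> E_t -> E_{s+t},  m s t x y = V_{s,t}^{-1}(x (x) y).
   V_{s,t} unitary  <=>  m is bilinear, preserves inner products of
   elementary tensors, and has a total (densely spanning) range.
   Associativity of V  <=>  associativity of m. *)
Definition product_system (R : realType) (E : R -> lmodType (Cx R))
  (ip : forall t, E t -> E t -> Cx R) (m : forall s t, E s -> E t -> E (s + t)) : Prop :=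
  [/\ forall t, 0 < t -> hilbert_space (ip t),
      forall s t, 0 < s -> 0 < t ->
        [/\ forall (a : Cx R) x x' y, m s t (a *: x + x') y = a *: m s t x y + m s t x' y,
            forall (a : Cx R) x y y', m s t x (a *: y + y') = a *: m s t x y + m s t x y',
            forall x x' y y', ip (s + t) (m s t x y) (m s t x' y') = ip s x x' * ip t y y'
          & forall z, cspan (ip (s + t)) (fun w => exists x y, w = m s t x y) z]
    & forall r s t, 0 < r -> 0 < s -> 0 < t -> forall x y z,
        tcast (addrA r s t) (m r (s + t) x (m s t y z)) = m (r + s) t (m r s x y) z].

(* Inclusion subsystem: closed subspaces F_t of E_t with
   V_{s,t}(F_{s+t}) ⊂ F_s (x) F_t, where F_s (x) F_t is the closed span of
   the elementary tensors x (x) y, x in F_s, y in F_t. *)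
Definition inclusion_subsystem (R : realType) (E : R -> lmodType (Cx R))
  (ip : forall t, E t -> E t -> Cx R) (m : forall s t, E s -> E t -> E (s + t))
  (F : forall t, E t -> Prop) : Prop :=
  (forall t, 0 < t -> closed_subspace (ip t) (F t)) /\
  (forall s t, 0 < s -> 0 < t -> forall z, F (s + t) z ->
     cspan (ip (s + t)) (fun w => exists x y, [/\ F s x, F t y & w = m s t x y]) z).

Definition Gsub (R : realType) (E : R -> lmodType (Cx R))
  (ip : forall t, E t -> E t -> Cx R) (m : forall s t, E s -> E t -> E (s + t))
  (F1 F2 : forall t, E t -> Prop) (t : R) : E t -> Prop :=
  cspan (ip t) (fun w => exists (r u : R) (H : r + u = t),
     [/\ 0 < r, 0 < u &
       exists x y, [/\ orthc (ip r) (F1 r) x, orthc (ip u) (F2 u) y &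
                       w = tcast H (m r u x y)]]).

Arguments Gsub {R E} ip m F1 F2 t.

Definition Gprime (R : realType) (E : R -> lmodType (Cx R))
  (ip : forall t, E t -> E t -> Cx R) (m : forall s t, E s -> E t -> E (s + t))
  (F1 F2 : forall t, E t -> Prop) (t : R) : E t -> Prop :=
  orthc (ip t) (@Gsub R E ip m F1 F2 t).
Arguments Gprime {R E} ip m F1 F2 t.

From Pilot Require Import Defs.
From HB Require Import structures.
From mathcomp Require Import all_boot all_order all_algebra.
From mathcomp Require Import reals complex.
From mathcomp Require Import ring lra classical_sets.
From Stdlib Require Import IndefiniteDescription.
Set Implicit Arguments. Unset Strict Implicit. Unset Printing Implicit Defensive.
Import Order.TTheory GRing.Theory Num.Theory.
Local Open Scope complex_scope.
Local Open Scope ring_scope.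

(* Every generator x (x) y of G_t (x _|_ F1_r, y _|_ F2_u, r + u = t) is
   orthogonal to F1_t and to F2_t, because F_t lies in the closed span of
   F_r (x) F_u; hence F1, F2 are contained in G'.  By associativity,
   G_s (x) E_t and E_s (x) G_t lie in G_{s+t}.  Now let z be in G'_{s+t} and
   approximate it by a finite sum of c_i x_i (x) y_i.  Splitting
   x_i = p_i + q_i and y_i = p'_i + q'_i along E = G' (+) G (projection
   theorem), the terms involving q_i or q'_i lie in G_{s+t}, so they are
   orthogonal to z and to the sum of c_i p_i (x) p'_i; by Pythagoras the
   latter is an at least as good approximation of z, which therefore lies in
   the closed span of G'_s (x) G'_t. *)

Lemma invSn_lt (R : realType) (e : R) : 0 < e ->
  exists K, forall n, (K <= n)%N -> n.+1%:R^-1 < e.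
Proof.
move=> e0; exists (Num.Def.archi_bound e^-1) => n Kn.
have lt_inv_n : e^-1 < n.+1%:R.
  apply: (lt_le_trans (archi_boundP _)); first by rewrite invr_ge0 ltW.
  by rewrite ler_nat (leq_trans Kn).
by rewrite -(invrK e) ltf_pV2 ?posrE ?invr_gt0.
Qed.

Lemma le0_small_mul (R : realFieldType) (r K : R) :
  0 <= K -> (forall e, 0 < e -> r <= e * K) -> r <= 0.
Proof.
move=> K0 small; rewrite leNgt; apply/negP => r0.
have K1 : 0 < K + 1 by rewrite ltr_pwDr.
have := small (r / (K + 1)) (divr_gt0 r0 K1).
rewrite mulrAC ler_pdivlMr //; nra.
Qed.

Lemma lspan_image2 (R : realType) (V : lmodType (Cx R)) (A B : Type)
  (f : A -> B -> V) w : lspan (fun v => exists a b, v = f a b) w ->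
  exists n (c : 'I_n -> Cx R) (X : 'I_n -> A) (Y : 'I_n -> B),
    w = \sum_(i < n) c i *: f (X i) (Y i).
Proof.
move=> [n [c [v [Sv ->]]]].
have /functional_choice [XY hXY] : forall i, exists p : A * B, v i = f p.1 p.2.
  by move=> i; have [a [b ->]] := Sv i; exists (a, b).
exists n, c, (fun i => (XY i).1), (fun i => (XY i).2).
by apply: eq_bigr => i _; rewrite hXY.
Qed.

Lemma lspan0 (R : realType) (V : lmodType (Cx R)) (S : V -> Prop) : lspan S 0.
Proof.
by exists 0%N, (fun _ => 0), (fun _ => 0); split => [[]//|]; rewrite big_ord0.
Qed.

Lemma lspan_sub (R : realType) (V : lmodType (Cx R)) (S : V -> Prop) v :
  S v -> lspan S v.
Proof.
move=> Sv; exists 1%N, (fun _ => 1), (fun _ => v); split => //.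
by rewrite big_ord1 scale1r.
Qed.

Lemma lspan_lin (R : realType) (V : lmodType (Cx R)) (S : V -> Prop) a x y :
  lspan S x -> lspan S y -> lspan S (a *: x + y).
Proof.
move=> [n1 [c1 [v1 [S1 ->]]]] [n2 [c2 [v2 [S2 ->]]]].
exists (n1 + n2)%N,
  (fun i => match split i with inl j => a * c1 j | inr k => c2 k end),
  (fun i => match split i with inl j => v1 j | inr k => v2 k end).
split; first by move=> i; case: (split i).
rewrite big_split_ord /= scaler_sumr; congr (_ + _); apply: eq_bigr => i _.
  by rewrite (unsplitK (inl _ : 'I_n1 + 'I_n2)) scalerA.
by rewrite (unsplitK (inr _ : 'I_n1 + 'I_n2)).
Qed.

Section ComplexModulus.
Variable R : realType.

Definition sqmod (z : Cx R) : R := complex.Re z ^+ 2 + complex.Im z ^+ 2.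

Lemma sqmodE z : z * z^* = (sqmod z)%:C.
Proof. by rewrite -normCK /sqmod add_Re2_Im2. Qed.

Lemma sqmod_ge0 z : 0 <= sqmod z.
Proof. by rewrite /sqmod; nra. Qed.

Lemma sqmod_eq0 z : sqmod z = 0 -> z = 0.
Proof.
case: z => a b; rewrite /sqmod /= => h.
have -> : a = 0 by nra.
by have -> : b = 0 by nra.
Qed.

Lemma sqmodD_le x y : sqmod (x + y) <= 2 * sqmod x + 2 * sqmod y.
Proof.
case: x => a b; case: y => c d; rewrite /sqmod /=.
have := sqr_ge0 (a - c); have := sqr_ge0 (b - d); nra.
Qed.

End ComplexModulus.

Section InnerProduct.
Variables (R : realType) (V : lmodType (Cx R)) (ip : V -> V -> Cx R).
Hypothesis Hip : inner_product ip.

Lemma ipDZl a x y z : ip (a *: x + y) z = a * ip x z + ip y z.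
Proof. by case: Hip => h _ _ _; apply: h. Qed.

Lemma ipC x y : ip y x = (ip x y)^*.
Proof. by case: Hip => _ h _ _; apply: h. Qed.

Lemma ip0l z : ip 0 z = 0.
Proof.
have := ipDZl 1 0 0 z; rewrite scaler0 addr0 mul1r => h.
by apply: (addrI (ip 0 z)); rewrite addr0 -h.
Qed.

Lemma ipDl x y z : ip (x + y) z = ip x z + ip y z.
Proof. by rewrite -[x]scale1r ipDZl mul1r scale1r. Qed.

Lemma ipZl a x z : ip (a *: x) z = a * ip x z.
Proof. by rewrite -[a *: x]addr0 ipDZl ip0l addr0. Qed.

Lemma ipNl x z : ip (- x) z = - ip x z.
Proof. by rewrite -scaleN1r ipZl mulN1r. Qed.

Lemma ipBl x y z : ip (x - y) z = ip x z - ip y z.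
Proof. by rewrite ipDl ipNl. Qed.

Lemma ip0r z : ip z 0 = 0.
Proof. by rewrite ipC ip0l conjC0. Qed.

Lemma ipDr x y z : ip z (x + y) = ip z x + ip z y.
Proof. by rewrite (ipC x z) (ipC y z) (ipC (x + y) z) ipDl rmorphD. Qed.

Lemma ipZr a x z : ip z (a *: x) = a^* * ip z x.
Proof. by rewrite (ipC x z) (ipC (a *: x) z) ipZl rmorphM. Qed.

Lemma ipNr x z : ip z (- x) = - ip z x.
Proof. by rewrite (ipC x z) (ipC (- x) z) ipNl rmorphN. Qed.

Lemma ipBr x y z : ip z (x - y) = ip z x - ip z y.
Proof. by rewrite ipDr ipNr. Qed.

Lemma ip_suml n (c : 'I_n -> Cx R) (v : 'I_n -> V) z :
  ip (\sum_(i < n) c i *: v i) z = \sum_(i < n) c i * ip (v i) z.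
Proof.
elim: n c v => [|n IH] c v; first by rewrite !big_ord0 ip0l.
by rewrite !big_ord_recr /= ipDl ipZl IH.
Qed.

Lemma ip_sumr n (c : 'I_n -> Cx R) (v : 'I_n -> V) z :
  ip z (\sum_(i < n) c i *: v i) = \sum_(i < n) (c i)^* * ip z (v i).
Proof.
elim: n c v => [|n IH] c v; first by rewrite !big_ord0 ip0r.
by rewrite !big_ord_recr /= ipDr ipZr IH.
Qed.

Definition sqnorm x : R := complex.Re (ip x x).

Lemma ip_sqnorm x : ip x x = (sqnorm x)%:C.
Proof.
case: Hip => _ _ ge0 _; have := ge0 x; rewrite /sqnorm.
by case: (ip x x) => a b; rewrite lecE /= => /andP[/eqP -> _].
Qed.

Lemma sqnorm_ge0 x : 0 <= sqnorm x.
Proof. by case: Hip => _ _ ge0 _; rewrite -lecR -ip_sqnorm. Qed.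

Lemma sqnorm_eq0 x : sqnorm x = 0 -> x = 0.
Proof. by case: Hip => _ _ _ eq0 h; apply: eq0; rewrite ip_sqnorm h. Qed.

Lemma sqnormN x : sqnorm (- x) = sqnorm x.
Proof. by rewrite /sqnorm ipNl ipNr opprK. Qed.

Lemma sqnormBC x y : sqnorm (x - y) = sqnorm (y - x).
Proof. by rewrite -sqnormN opprB. Qed.

Lemma sqnormZ a x : sqnorm (a *: x) = sqmod a * sqnorm x.
Proof.
apply: (@complexI R); rewrite rmorphM /= -sqmodE -!ip_sqnorm ipZl ipZr.
by ring.
Qed.

Lemma parallelogram x y :
  sqnorm (x + y) + sqnorm (x - y) = 2 * sqnorm x + 2 * sqnorm y.
Proof.
apply: (@complexI R); rewrite !rmorphD !rmorphM /= -!ip_sqnorm rmorph_nat.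
by rewrite !ipDl !ipDr !ipNl !ipNr; ring.
Qed.

Lemma pythagoras x y : ip y x = 0 -> sqnorm (x - y) = sqnorm x + sqnorm y.
Proof.
move=> yx; apply: (@complexI R); rewrite rmorphD /= -!ip_sqnorm.
by rewrite ipBl !ipBr yx (ipC y x) yx conjC0 subr0 sub0r opprK.
Qed.

Lemma sqnorm_sub_proj x y : sqnorm y != 0 ->
  sqnorm (x - (ip x y / ip y y) *: y) = sqnorm x - sqmod (ip x y) / sqnorm y.
Proof.
move=> y0; have y0C : (sqnorm y)%:C != 0 by apply: contra y0 => /eqP[->].
have conj_div : (ip x y / (sqnorm y)%:C)^* = (ip x y)^* / (sqnorm y)%:C.
  rewrite rmorphM fmorphV; congr (_ * _^-1).
  by apply: conj_Creal; rewrite complex_real.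
apply: (@complexI R); rewrite rmorphB rmorphM fmorphV /= -sqmodE.
rewrite -!ip_sqnorm ipBl !ipBr !ipZl !ipZr (ipC x y) !ip_sqnorm conj_div.
by field.
Qed.

Lemma cauchy_schwarz x y : sqmod (ip x y) <= sqnorm x * sqnorm y.
Proof.
have [y0|y0] := eqVneq (sqnorm y) 0.
  by rewrite y0 mulr0 (sqnorm_eq0 y0) ip0r /sqmod expr0n /= addr0.
have := sqnorm_ge0 (x - (ip x y / ip y y) *: y).
rewrite sqnorm_sub_proj // subr_ge0 ler_pdivrMr //.
by rewrite lt0r y0 sqnorm_ge0.
Qed.

Lemma closure_ipP (A : V -> Prop) x : closure_ip ip A x <->
  forall e : R, 0 < e -> exists y, A y /\ sqnorm (x - y) < e.
Proof.
split => [cl e e0 | cl [e b]].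
  have e0C : 0 < e%:C by rewrite ltcR.
  by have [y [Ay]] := cl _ e0C; rewrite /d2 ip_sqnorm ltcR; exists y.
rewrite ltcE /= => /andP[/eqP -> /cl [y [Ay lt]]].
by exists y; rewrite /d2 ip_sqnorm ltcR.
Qed.

Lemma complete_ipP : complete_ip ip -> forall u : nat -> V,
  (forall e, 0 < e -> exists K, forall n k, (K <= n)%N -> (K <= k)%N ->
     sqnorm (u n - u k) < e) ->
  exists q, forall e, 0 < e -> exists K, forall n, (K <= n)%N ->
     sqnorm (u n - q) < e.
Proof.
move=> Hc u cauchy.
have [q cvg] : exists q, forall e : Cx R, 0 < e -> exists K, forall n,
    (K <= n)%N -> d2 ip (u n) q < e.
  apply: Hc => -[e b]; rewrite ltcE /= => /andP[/eqP -> /cauchy [K hK]].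
  by exists K => n k Kn Kk; rewrite /d2 ip_sqnorm ltcR hK.
exists q => e e0; have e0C : 0 < e%:C by rewrite ltcR.
by have [K hK] := cvg _ e0C; exists K => n /hK; rewrite /d2 ip_sqnorm ltcR.
Qed.

Lemma ip_eq0_closure (A : V -> Prop) x g : closure_ip ip A x ->
  (forall v, A v -> ip v g = 0) -> ip x g = 0.
Proof.
move=> /closure_ipP cl orth; apply: sqmod_eq0; apply/eqP.
rewrite eq_le sqmod_ge0 andbT; apply: (le0_small_mul (sqnorm_ge0 g)) => e e0.
have [v [Av lt]] := cl e e0.
have -> : ip x g = ip (x - v) g by rewrite ipBl (orth v Av) subr0.
apply: le_trans (cauchy_schwarz _ _) _.
by rewrite ler_wpM2r ?sqnorm_ge0 ?ltW.
Qed.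

Lemma ip_eq0_cspan (S : V -> Prop) x g : cspan ip S x ->
  (forall v, S v -> ip v g = 0) -> ip x g = 0.
Proof.
move=> cl orth; apply: ip_eq0_closure cl _ => _ [n [c [v [Sv ->]]]].
by rewrite ip_suml big1 // => i _; rewrite orth ?mulr0.
Qed.

Lemma orthcC (S : V -> Prop) x y : orthc ip S x -> S y -> ip y x = 0.
Proof. by move=> ox Sy; rewrite ipC ox ?conjC0. Qed.

Lemma orthc_cspan (S : V -> Prop) x :
  (forall v, S v -> ip v x = 0) -> orthc ip (cspan ip S) x.
Proof. by move=> orth y Sy; rewrite ipC (ip_eq0_cspan Sy orth) conjC0. Qed.

Lemma orthc_closed_subspace (S : V -> Prop) : closed_subspace ip (orthc ip S).
Proof.
split=> [y _ | a x y ox oy z Sz | x cl z Sz]; first by rewrite ip0l.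
  by rewrite ipDZl ox // oy // mulr0 addr0.
by apply: ip_eq0_closure cl _ => v; apply.
Qed.

Section NearestPoint.
Variables (M : V -> Prop) (x : V) (d : R).
Hypotheses (M0 : M 0) (M_lin : forall a u v, M u -> M v -> M (a *: u + v)).
Hypothesis d_lb : forall v, M v -> d <= sqnorm (x - v).

Lemma near_min_sqdist u v a b : M u -> M v ->
  sqnorm (x - u) < d + a -> sqnorm (x - v) < d + b ->
  sqnorm (u - v) <= 2 * a + 2 * b.
Proof.
move=> Mu Mv xu xv; pose w := 2^-1 *: (u + v).
have Mw : M w.
  by rewrite /w -[_ *: _]addr0; apply: M_lin => //; rewrite -[u]scale1r; apply: M_lin.
have para := parallelogram (x - u) (x - v).
have sum_eq : x - u + (x - v) = 2 *: (x - w).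
  rewrite /w scalerBr scalerA mulfV ?pnatr_eq0 // scale1r scaler_nat.
  by rewrite mulr2n opprD !addrA [x - u + x]addrAC.
have diff_eq : x - u - (x - v) = v - u by rewrite opprB addrC addrA subrK.
have sqmod2 : sqmod (2 : Cx R) = 4 by rewrite /sqmod /=; ring.
rewrite sum_eq diff_eq sqnormZ sqmod2 (sqnormBC v) in para.
have := d_lb Mw; lra.
Qed.

Lemma near_min_orth u a g : M u -> M g -> sqnorm (x - u) < d + a ->
  sqmod (ip (x - u) g) <= a * sqnorm g.
Proof.
move=> Mu Mg xu; have [g0|g0] := eqVneq (sqnorm g) 0.
  by rewrite g0 mulr0 (sqnorm_eq0 g0) ip0r /sqmod expr0n /= addr0.
have g_gt0 : 0 < sqnorm g by rewrite lt0r g0 sqnorm_ge0.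
pose lam := ip (x - u) g / ip g g.
have := d_lb (M_lin lam Mg Mu).
rewrite opprD addrA addrAC sqnorm_sub_proj // -ler_pdivrMr //.
set P := _ / sqnorm g; lra.
Qed.

End NearestPoint.

Lemma orth_proj_subspace : complete_ip ip -> forall (M : V -> Prop) x, M 0 ->
  (forall a u v, M u -> M v -> M (a *: u + v)) ->
  exists q, closure_ip ip M q /\ forall g, M g -> ip (x - q) g = 0.
Proof.
move=> Hc M x M0 M_lin.
pose D : set R := fun r => exists v, M v /\ r = sqnorm (x - v).
have hD : has_inf D.
  split; first by exists (sqnorm (x - 0)), 0.
  by exists 0 => _ [v [_ ->]]; exact: sqnorm_ge0.
have d_lb v : M v -> inf D <= sqnorm (x - v).
  by move=> Mv; apply: ge_inf hD.2 _ _; exists v.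
have /functional_choice [u hu] : forall n : nat,
    exists v, M v /\ sqnorm (x - v) < inf D + n.+1%:R^-1.
  move=> n; have n_gt0 : 0 < n.+1%:R^-1 :> R by rewrite invr_gt0 ltr0Sn.
  by have [_ [v [Mv ->]] lt] := inf_adherent n_gt0 hD; exists v.
have u_cauchy : forall e, 0 < e -> exists K, forall n k, (K <= n)%N ->
    (K <= k)%N -> sqnorm (u n - u k) < e.
  move=> e e0; have e4 : 0 < e / 4 by rewrite divr_gt0.
  have [K hK] := invSn_lt e4; exists K => n k Kn Kk.
  apply: le_lt_trans (near_min_sqdist M0 M_lin d_lb (hu n).1 (hu k).1
    (hu n).2 (hu k).2) _.
  have := hK n Kn; have := hK k Kk.
  set a := n.+1%:R^-1; set b := k.+1%:R^-1; lra.
have [q cvg] := complete_ipP Hc u_cauchy.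
exists q; split.
  apply/closure_ipP => e /cvg [K hK]; exists (u K).
  by split; [exact: (hu K).1 | rewrite sqnormBC hK].
move=> g Mg; apply: sqmod_eq0; apply/eqP; rewrite eq_le sqmod_ge0 andbT.
have g_ge0 := sqnorm_ge0 g.
apply: (@le0_small_mul _ _ (4 * sqnorm g)); first by rewrite mulr_ge0.
move=> e e0; have [K1 hK1] := invSn_lt e0; have [K2 hK2] := cvg e e0.
pose n := maxn K1 K2.
have -> : ip (x - q) g = ip (x - u n) g + ip (u n - q) g.
  by rewrite -ipDl addrA subrK.
apply: le_trans (sqmodD_le _ _) _.
have := near_min_orth M_lin d_lb (hu n).1 Mg (hu n).2.
have := cauchy_schwarz (u n - q) g.
have := hK1 n (leq_maxl _ _); have := hK2 n (leq_maxr _ _).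
set a := n.+1%:R^-1; set b := sqnorm (u n - q); nra.
Qed.

Lemma orth_proj_cspan : complete_ip ip -> forall (S : V -> Prop) x,
  exists q, cspan ip S q /\ orthc ip (cspan ip S) (x - q).
Proof.
move=> Hc S x; have [q [Sq orth]] := orth_proj_subspace Hc x (lspan0 S)
  (fun a u v => @lspan_lin _ _ S a u v).
exists q; split => //; apply: orthc_cspan => v Sv.
rewrite ipC orth; last exact: lspan_sub.
exact: conjC0.
Qed.

End InnerProduct.

Section LinearMap.
Variables (R : realType) (V W : lmodType (Cx R)).
Variables (ipV : V -> V -> Cx R) (ipW : W -> W -> Cx R).
Hypotheses (HV : inner_product ipV) (HW : inner_product ipW).
Variable f : V -> W.
Hypothesis f_lin : forall a x y, f (a *: x + y) = a *: f x + f y.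

Lemma linear_f0 : f 0 = 0.
Proof.
have := f_lin 1 0 0; rewrite scaler0 addr0 scale1r => h.
by apply: (addrI (f 0)); rewrite addr0 -h.
Qed.

Lemma linear_fB x y : f (x - y) = f x - f y.
Proof. by have := f_lin (-1) y x; rewrite !scaleN1r addrC => ->; rewrite addrC. Qed.

Lemma linear_f_sum n (c : 'I_n -> Cx R) (v : 'I_n -> V) :
  f (\sum_(i < n) c i *: v i) = \sum_(i < n) c i *: f (v i).
Proof.
elim: n c v => [|n IH] c v; first by rewrite !big_ord0 linear_f0.
by rewrite !big_ord_recr /= [in LHS]addrC f_lin IH addrC.
Qed.

Lemma cspan_map (K : R) (S : V -> Prop) (T : W -> Prop) :
  0 <= K -> (forall x, sqnorm ipW (f x) = sqnorm ipV x * K) ->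
  (forall v, S v -> T (f v)) -> forall x, cspan ipV S x -> cspan ipW T (f x).
Proof.
move=> K0 fK ST x /(closure_ipP HV) cx; apply/(closure_ipP HW) => e e0.
have K1 : 0 < K + 1 by rewrite ltr_pwDr.
have [_ [[n [c [w [Sw ->]]]] lt]] := cx _ (divr_gt0 e0 K1).
exists (\sum_(i < n) c i *: f (w i)); split.
  by exists n, c, (fun i => f (w i)); split => // i; apply: ST.
rewrite -linear_f_sum -linear_fB fK.
rewrite ltr_pdivlMr // in lt.
have := sqnorm_ge0 HV (x - \sum_(i < n) c i *: w i); nra.
Qed.

End LinearMap.

Section ProductSystem.
Unset Implicit Arguments.
Variables (R : realType) (E : R -> lmodType (Cx R)).
Variables (ip : forall t, E t -> E t -> Cx R) (m : forall s t, E s -> E t -> E (s + t)).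
Set Implicit Arguments.

Lemma tcast_comp (a b c : R) (H1 : a = b) (H2 : b = c) (v : E a) :
  Defs.tcast H2 (Defs.tcast H1 v) = Defs.tcast (eq_trans H1 H2) v.
Proof. by destruct H2. Qed.

Lemma tcastK (a b : R) (H : a = b) (v : E a) : Defs.tcast (esym H) (Defs.tcast H v) = v.
Proof. by destruct H. Qed.

Lemma tensor_tcastl (r u s t : R) (H : r + u = s) (v : E (r + u)) (y : E t) :
  m s t (Defs.tcast H v) y = Defs.tcast (f_equal (fun z => z + t) H) (m (r + u) t v y).
Proof. by destruct H. Qed.

Lemma tensor_tcastr (s r u t : R) (H : r + u = t) (x : E s) (v : E (r + u)) :
  m s t x (Defs.tcast H v) = Defs.tcast (f_equal (fun z => s + z) H) (m s (r + u) x v).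
Proof. by destruct H. Qed.

Lemma orthc_tcast (F : forall t, E t -> Prop) (r u t : R) (H : r + u = t)
  (w : E (r + u)) :
  orthc (ip (r + u)) (F (r + u)) w -> orthc (ip t) (F t) (Defs.tcast H w).
Proof. by destruct H. Qed.

Hypothesis PS : product_system ip m.

Lemma ip_inner (t : R) : 0 < t -> inner_product (ip t).
Proof. by case: PS => h _ _ tp; case: (h t tp). Qed.

Lemma ip_complete (t : R) : 0 < t -> complete_ip (ip t).
Proof. by case: PS => h _ _ tp; case: (h t tp). Qed.

Lemma tensor_linl (s t : R) : 0 < s -> 0 < t -> forall a x x' y,
  m s t (a *: x + x') y = a *: m s t x y + m s t x' y.
Proof. by case: PS => _ h _ hs ht; case: (h s t hs ht). Qed.

Lemma tensor_linr (s t : R) : 0 < s -> 0 < t -> forall a x y y',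
  m s t x (a *: y + y') = a *: m s t x y + m s t x y'.
Proof. by case: PS => _ h _ hs ht; case: (h s t hs ht). Qed.

Lemma ip_tensor (s t : R) : 0 < s -> 0 < t -> forall x x' y y',
  ip (s + t) (m s t x y) (m s t x' y') = ip s x x' * ip t y y'.
Proof. by case: PS => _ h _ hs ht; case: (h s t hs ht). Qed.

Lemma tensor_total (s t : R) : 0 < s -> 0 < t -> forall z,
  cspan (ip (s + t)) (fun w => exists x y, w = m s t x y) z.
Proof. by case: PS => _ h _ hs ht; case: (h s t hs ht). Qed.

Lemma tensorA (r s t : R) : 0 < r -> 0 < s -> 0 < t -> forall x y z,
  Defs.tcast (addrA r s t) (m r (s + t) x (m s t y z)) = m (r + s) t (m r s x y) z.
Proof. by case: PS => _ _ h; apply: h. Qed.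

Lemma sqnorm_tensor (s t : R) (x : E s) (y : E t) : 0 < s -> 0 < t ->
  sqnorm (ip (s + t)) (m s t x y) = sqnorm (ip s) x * sqnorm (ip t) y.
Proof.
move=> hs ht; apply: (@complexI R).
rewrite rmorphM /= -(ip_sqnorm (ip_inner hs)) -(ip_sqnorm (ip_inner ht)).
by rewrite -(ip_sqnorm (ip_inner (addr_gt0 hs ht))) ip_tensor.
Qed.

Lemma tensor_split (s t : R) (x qx : E s) (y qy : E t) : 0 < s -> 0 < t ->
  m s t x y = m s t (x - qx) (y - qy) + (m s t qx y + m s t (x - qx) qy).
Proof.
move=> hs ht; have eX : x = 1 *: (x - qx) + qx by rewrite scale1r subrK.
have eY : y = 1 *: (y - qy) + qy by rewrite scale1r subrK.
rewrite {1}eX tensor_linl // scale1r {1}eY tensor_linr // scale1r.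
by rewrite -addrA (addrC (m s t (x - qx) qy)).
Qed.

Section Subsystem.
Unset Implicit Arguments.
Variable F : forall t, E t -> Prop.
Set Implicit Arguments.
Hypothesis IF : inclusion_subsystem ip m F.

Lemma orthc_tensorl (u t : R) (b : E u) (y : E t) : 0 < u -> 0 < t ->
  orthc (ip u) (F u) b -> orthc (ip (u + t)) (F (u + t)) (m u t b y).
Proof.
move=> hu ht ob z Fz; have hut := addr_gt0 hu ht.
rewrite (ipC (ip_inner hut)) (ip_eq0_cspan (ip_inner hut) (IF.2 u t hu ht z Fz)).
  exact: conjC0.
by move=> _ [f [g [Ff Fg ->]]]; rewrite ip_tensor // (orthcC (ip_inner hu) ob Ff) mul0r.
Qed.

Lemma orthc_tensorr (s r : R) (x : E s) (a : E r) : 0 < s -> 0 < r ->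
  orthc (ip r) (F r) a -> orthc (ip (s + r)) (F (s + r)) (m s r x a).
Proof.
move=> hs hr oa z Fz; have hsr := addr_gt0 hs hr.
rewrite (ipC (ip_inner hsr)) (ip_eq0_cspan (ip_inner hsr) (IF.2 s r hs hr z Fz)).
  exact: conjC0.
by move=> _ [f [g [Ff Fg ->]]]; rewrite ip_tensor // (orthcC (ip_inner hr) oa Fg) mulr0.
Qed.

End Subsystem.

Unset Implicit Arguments.
Variables (F1 F2 : forall t, E t -> Prop).
Set Implicit Arguments.
Hypotheses (I1 : inclusion_subsystem ip m F1) (I2 : inclusion_subsystem ip m F2).

Local Notation G := (Gsub ip m F1 F2).
Local Notation G' := (Gprime ip m F1 F2).

Definition Ggen (t : R) (w : E t) : Prop := exists (r u : R) (H : r + u = t),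
  [/\ 0 < r, 0 < u &
    exists x y, [/\ orthc (ip r) (F1 r) x, orthc (ip u) (F2 u) y &
                    w = Defs.tcast H (m r u x y)]].
Arguments Ggen : clear implicits.

Lemma GsubE (t : R) : G t = cspan (ip t) (Ggen t).
Proof. by []. Qed.

Lemma Ggen_orthc1 (t : R) (w : E t) : Ggen t w -> orthc (ip t) (F1 t) w.
Proof.
move=> [r [u [H [hr hu [a [b [oa _ ->]]]]]]].
by apply: orthc_tcast; apply: orthc_tensorl.
Qed.

Lemma Ggen_orthc2 (t : R) (w : E t) : Ggen t w -> orthc (ip t) (F2 t) w.
Proof.
move=> [r [u [H [hr hu [a [b [_ ob ->]]]]]]].
by apply: orthc_tcast; apply: orthc_tensorr.
Qed.

Lemma F1_sub_Gprime (t : R) (x : E t) : 0 < t -> F1 t x -> G' t x.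
Proof.
move=> tp Fx; rewrite /Gprime GsubE.
by apply: (orthc_cspan (ip_inner tp)) => v /Ggen_orthc1; apply.
Qed.

Lemma F2_sub_Gprime (t : R) (x : E t) : 0 < t -> F2 t x -> G' t x.
Proof.
move=> tp Fx; rewrite /Gprime GsubE.
by apply: (orthc_cspan (ip_inner tp)) => v /Ggen_orthc2; apply.
Qed.

Lemma Ggen_tensorl (s t : R) (y : E t) (w : E s) : 0 < s -> 0 < t ->
  Ggen s w -> Ggen (s + t) (m s t w y).
Proof.
move=> hs ht [r [u [H [hr hu [a [b [oa ob ->]]]]]]].
exists r, (u + t), (eq_trans (addrA r u t) (f_equal (fun z => z + t) H)).
split => //; first exact: addr_gt0.
exists a, (m u t b y); split => //; first exact: orthc_tensorl.
by rewrite tensor_tcastl -tensorA // tcast_comp.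
Qed.

Lemma Ggen_tensorr (s t : R) (x : E s) (w : E t) : 0 < s -> 0 < t ->
  Ggen t w -> Ggen (s + t) (m s t x w).
Proof.
move=> hs ht [r [u [H [hr hu [a [b [oa ob ->]]]]]]].
exists (s + r), u, (eq_trans (esym (addrA s r u)) (f_equal (fun z => s + z) H)).
split => //; first exact: addr_gt0.
exists (m s r x a), b; split => //; first exact: orthc_tensorr.
by rewrite tensor_tcastr -tcast_comp -tensorA // tcastK.
Qed.

Lemma Gsub_tensorl (s t : R) (q : E s) (y : E t) : 0 < s -> 0 < t ->
  G s q -> G (s + t) (m s t q y).
Proof.
move=> hs ht; rewrite !GsubE.
apply: (cspan_map (ip_inner hs) (ip_inner (addr_gt0 hs ht)) (f := m s t ^~ y)).
- by move=> a x x'; rewrite tensor_linl.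
- exact: sqnorm_ge0 (ip_inner ht) y.
- by move=> x; rewrite sqnorm_tensor.
- by move=> v; apply: Ggen_tensorl.
Qed.

Lemma Gsub_tensorr (s t : R) (x : E s) (q : E t) : 0 < s -> 0 < t ->
  G t q -> G (s + t) (m s t x q).
Proof.
move=> hs ht; rewrite !GsubE.
apply: (cspan_map (ip_inner ht) (ip_inner (addr_gt0 hs ht)) (f := m s t x)).
- by move=> a y y'; rewrite tensor_linr.
- exact: sqnorm_ge0 (ip_inner hs) x.
- by move=> y; rewrite sqnorm_tensor // mulrC.
- by move=> v; apply: Ggen_tensorr.
Qed.

Lemma Gsub_decomp (t : R) : 0 < t ->
  exists Q : E t -> E t, forall x, G t (Q x) /\ G' t (x - Q x).
Proof.
move=> tp; apply: (functional_choice (fun x q => G t q /\ G' t (x - q))) => x.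
exact: orth_proj_cspan (ip_inner tp) (ip_complete tp) _ x.
Qed.

Lemma Gprime_tensor_approx (s t : R) (z : E (s + t)) n (c : 'I_n -> Cx R)
  (X : 'I_n -> E s) (Y : 'I_n -> E t) :
  0 < s -> 0 < t -> G' (s + t) z ->
  exists w, lspan (fun v => exists x y, [/\ G' s x, G' t y & v = m s t x y]) w /\
    sqnorm (ip (s + t)) (z - w) <=
    sqnorm (ip (s + t)) (z - \sum_(i < n) c i *: m s t (X i) (Y i)).
Proof.
move=> hs ht Gz; have hst := addr_gt0 hs ht.
have [Qs hQs] := Gsub_decomp hs; have [Qt hQt] := Gsub_decomp ht.
pose px i := X i - Qs (X i); pose py i := Y i - Qt (Y i).
pose w := \sum_(i < n) c i *: m s t (px i) (py i).
pose r := \sum_(i < n) c i *: (m s t (Qs (X i)) (Y i) + m s t (px i) (Qt (Y i))).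
exists w; split.
  exists n, c, (fun i => m s t (px i) (py i)); split => // i.
  by exists (px i), (py i); split; [exact: (hQs _).2 | exact: (hQt _).2 |].
have -> : \sum_(i < n) c i *: m s t (X i) (Y i) = w + r.
  rewrite -big_split; apply: eq_bigr => i _.
  by rewrite /= -scalerDr (tensor_split (X i) (Qs (X i)) (Y i) (Qt (Y i)) hs ht).

have r_orth : ip (s + t) r (z - w) = 0.
  rewrite (ip_suml (ip_inner hst)) big1 // => i _.
  have Gq1 := Gsub_tensorl (Y i) hs ht (hQs (X i)).1.
  have Gq2 := Gsub_tensorr (px i) hs ht (hQt (Y i)).1.
  have w_orth1 : ip (s + t) (m s t (Qs (X i)) (Y i)) w = 0.
    rewrite (ip_sumr (ip_inner hst)) big1 // => j _.
    by rewrite ip_tensor // (orthcC (ip_inner hs) (hQs _).2 (hQs _).1) !mul0r mulr0.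
  have w_orth2 : ip (s + t) (m s t (px i) (Qt (Y i))) w = 0.
    rewrite (ip_sumr (ip_inner hst)) big1 // => j _.
    by rewrite ip_tensor // (orthcC (ip_inner ht) (hQt _).2 (hQt _).1) !mulr0.
  rewrite (ipDl (ip_inner hst)) !(ipBr (ip_inner hst)) w_orth1 w_orth2.
  by rewrite !(orthcC (ip_inner hst) Gz) // !subrr addr0 mulr0.
rewrite opprD addrA (pythagoras (ip_inner hst) r_orth) lerDl.
exact: sqnorm_ge0 (ip_inner hst) r.
Qed.

Lemma Gprime_subsystem : inclusion_subsystem ip m G'.
Proof.
split=> [t tp | s t hs ht z Gz]; first exact: orthc_closed_subspace (ip_inner tp) _.
have hst := addr_gt0 hs ht; apply/(closure_ipP (ip_inner hst)) => e e0.
have /(closure_ipP (ip_inner hst)) /(_ e e0) [_ [/lspan_image2 [n [c [X [Y ->]]]] lt]]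
  := tensor_total hs ht z.
have [w [w_span le]] := Gprime_tensor_approx c X Y hs ht Gz.
by exists w; split => //; apply: le_lt_trans lt.
Qed.

End ProductSystem.

Theorem mainTheorem17 (R : realType) (E : R -> lmodType (Cx R))
  (ip : forall t, E t -> E t -> Cx R) (m : forall s t, E s -> E t -> E (s + t))
  (F1 F2 : forall t, E t -> Prop) :
  product_system ip m ->
  inclusion_subsystem ip m F1 -> inclusion_subsystem ip m F2 ->
  inclusion_subsystem ip m (Gprime ip m F1 F2) /\
  (forall t, 0 < t -> forall x, (F1 t x -> Gprime ip m F1 F2 t x) /\
                                (F2 t x -> Gprime ip m F1 F2 t x)).
Proof.
move=> PS I1 I2; split; first exact: Gprime_subsystem.
by move=> t tp x; split; [exact: F1_sub_Gprime | exact: F2_sub_Gprime].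
Qed.
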